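(* Let $n,m_A,m_B>0$ be integers, $A,B$ quantum systems of dimensions $m_A,m_B$, and $\psi_{AB}$ a bipartite state with $\psi_A=\mathrm{id}_{m_A}/m_A$ and $\psi_B=\mathrm{id}_{m_B}/m_B$. Let $\mathcal{T}:\mathcal{M}(B^n)\to\mathcal{M}(A^n)$ be the Markov super-operator with respect to $\psi_{AB}^{\otimes n}$. Then for every $Q\in\mathcal{M}(B^n)$ and every $S\subseteq[n]$, $\mathcal{T}(Q[S])=\mathcal{T}(Q)[S]$.
   Context: A standard orthonormal basis of $\mathcal{M}_k$ (complex $k\times k$ matrices with inner product $\langle X,Y\rangle=\frac1k\mathrm{Tr}X^\dagger Y$) is an orthonormal basis $\{\mathcal{B}_0,\ldots,\mathcal{B}_{k^2-1}\}$ of Hermitian matrices with $\mathcal{B}_0=\mathrm{id}_k$. For $\sigma\in\{0,\ldots,k^2-1\}^n$ put $\mathcal{B}_\sigma=\mathcal{B}_{\sigma_1}\otimes\cdots\otimes\mathcal{B}_{\sigma_n}$; every $X\in\mathcal{M}_k^{\otimes n}$ has a unique expansion $X=\sum_\sigma\widehat X(\sigma)\mathcal{B}_\sigma$. The Efron–Stein component is $X[S]=\sum_{\sigma:\{i:\sigma_i\neq0\}=S}\widehat X(\sigma)\mathcal{B}_\sigma$; it does not depend on the choice of standard orthonormal basis. On $A^n$ and $B^n$ the inner products are $\langle X,Y\rangle=\frac1{m_A^n}\mathrm{Tr}X^\dagger Y$ and $\frac1{m_B^n}\mathrm{Tr}X^\dagger Y$ respectively. The Markov super-operator with respect to $\psi_{AB}^{\otimes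 n}$ is the map $\mathcal{T}:\mathcal{M}(B^n)\to\mathcal{M}(A^n)$ with $\mathrm{Tr}((M^\dagger\otimes Q)\psi_{AB}^{\otimes n})=\langle M,\mathcal{T}(Q)\rangle$ for all $M\in\mathcal{M}(A^n)$, $Q\in\mathcal{M}(B^n)$. *)

From HB Require Import structures.
From mathcomp Require Import all_boot all_order all_algebra.
From mathcomp Require Import complex Rstruct.

Set Implicit Arguments.
Unset Strict Implicit.
Unset Printing Implicit Defensive.
Import Order.TTheory GRing.Theory Num.Theory.
Local Open Scope ring_scope.

Definition CC : numClosedFieldType := Rdefinitions.R[i].

Section Ops.
Variable C : numClosedFieldType.

Definition Op (I : finType) := I -> I -> C.

Definition op_id (I : finType) : Op I := fun i j => (i == j)%:R.
Definition op_adj (I : finType) (X : Op I) : Op I := fun i j => (X j i)^*.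
Definition op_mul (I : finType) (X Y : Op I) : Op I :=
  fun i j => \sum_(k : I) X i k * Y k j.
Definition op_tr (I : finType) (X : Op I) : C := \sum_(i : I) X i i.
Definition op_kron (I J : finType) (X : Op I) (Y : Op J) : Op (I * J)%type :=
  fun p q => X p.1 q.1 * Y p.2 q.2.

Definition hermitian (I : finType) (X : Op I) := forall i j, X j i = (X i j)^*.
Definition psd (I : finType) (X : Op I) :=
  hermitian X /\ forall v : I -> C, 0 <= \sum_(i : I) \sum_(j : I) (v i)^* * X i j * v j.
Definition is_state (I : finType) (X : Op I) := psd X /\ op_tr X = 1.

Definition marg_A (I J : finType) (psi : Op (I * J)%type) : Op I :=
  fun a a' => \sum_(b : J) psi (a, b) (a', b).
Definition marg_B (I J : finType) (psi : Op (I * J)%type) : Op J :=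
  fun b b' => \sum_(a : I) psi (a, b) (a, b').

Definition hs_ip (I : finType) (X Y : Op I) : C :=
  (#|I|%:R)^-1 * op_tr (op_mul (op_adj X) Y).

(* index set of the n-fold system with local dimension m: (C^m)^{(x) n} *)
Definition Idx (m n : nat) := {ffun 'I_n -> 'I_m}.

Definition std_onb (k : nat) (Bs : 'I_(k ^ 2) -> Op 'I_k) :=
  [/\ forall p, hermitian (Bs p),
      forall p q, hs_ip (Bs p) (Bs q) = (p == q)%:R &
      forall p : 'I_(k ^ 2), val p = 0%N -> Bs p = @op_id _].

Definition basis_tensor (k n : nat) (Bs : 'I_(k ^ 2) -> Op 'I_k)
  (sigma : {ffun 'I_n -> 'I_(k ^ 2)}) : Op (Idx k n) :=
  fun i j => \prod_(t < n) Bs (sigma t) (i t) (j t).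

Definition supp (k n : nat) (sigma : {ffun 'I_n -> 'I_(k ^ 2)}) : {set 'I_n} :=
  [set t | val (sigma t) != 0%N].

Definition is_expansion (k n : nat) (Bs : 'I_(k ^ 2) -> Op 'I_k) (X : Op (Idx k n))
  (c : {ffun 'I_n -> 'I_(k ^ 2)} -> C) :=
  forall i j, X i j = \sum_(sigma : {ffun 'I_n -> 'I_(k ^ 2)}) c sigma * basis_tensor Bs sigma i j.

Definition es_comp (k n : nat) (Bs : 'I_(k ^ 2) -> Op 'I_k)
  (c : {ffun 'I_n -> 'I_(k ^ 2)} -> C) (S : {set 'I_n}) : Op (Idx k n) :=
  fun i j => \sum_(sigma : {ffun 'I_n -> 'I_(k ^ 2)} | supp sigma == S)
               c sigma * basis_tensor Bs sigma i j.

(* psi^{(x) n}, viewed (after the canonical reordering (AB)^n ~ A^n B^n)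
   as an operator on C^(A^n) (x) C^(B^n) *)
Definition state_pow (mA mB n : nat) (psi : Op ('I_mA * 'I_mB)%type) :
  Op (Idx mA n * Idx mB n)%type :=
  fun p q => \prod_(t < n) psi (p.1 t, p.2 t) (q.1 t, q.2 t).

Definition is_markov (mA mB n : nat) (psi : Op ('I_mA * 'I_mB)%type)
  (T : Op (Idx mB n) -> Op (Idx mA n)) :=
  forall (M : Op (Idx mA n)) (Q : Op (Idx mB n)),
    op_tr (op_mul (op_kron (op_adj M) Q) (@state_pow mA mB n psi)) = hs_ip M (T Q).

End Ops.

From HB Require Import structures.
From mathcomp Require Import all_boot all_order all_algebra.
From mathcomp Require Import complex Rstruct.
From mathcomp Require Import ring.
From Stdlib Require Import FunctionalExtensionality.
Import GRing.Theory Num.Theory.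
Local Open Scope ring_scope.

(* Write corr(M, Q) = Tr((M^dagger (x) Q) psi^{(x) n}), so that <M, T Q> = corr(M, Q).
   On tensor basis elements corr factorises into single-site factors
   corr(B_p, B_q); because both marginals of psi are maximally mixed, a factor
   with exactly one of p, q equal to 0 is <B_p, id> or <id, B_q>, hence 0.  So
   corr(B_s, B_u) = 0 unless supp s = supp u, and the coefficient
   <B_s, T(Q[S])> = corr(B_s, Q[S]) equals <B_s, T Q> if supp s = S and 0
   otherwise, i.e. the coefficient of (T Q)[S].  Finally, k^2 orthonormal
   matrices of M_k form a basis, so their tensor products do too and the
   coefficients determine the operator. *)

Set Implicit Arguments.
Unset Strict Implicit.
Unset Printing Implicit Defensive.

Section Operators.
Variable C : numClosedFieldType.

Lemma sum_mul_delta (I : finType) (F : I -> C) i :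
  \sum_k F k * (k == i)%:R = F i.
Proof.
rewrite (bigD1 i) //= eqxx mulr1 big1 ?addr0 // => k /negbTE->.
exact: mulr0.
Qed.

Lemma sum_pair (I J : finType) (F : I * J -> C) :
  \sum_p F p = \sum_i \sum_j F (i, j).
Proof. by rewrite pair_bigA; apply: eq_bigr => -[]. Qed.

Lemma sum2_linear (I J K : finType) (w x : I -> J -> C) (c : K -> C)
    (z : K -> I -> J -> C) :
  (forall i j, x i j = \sum_s c s * z s i j) ->
  \sum_i \sum_j w i j * x i j = \sum_s c s * \sum_i \sum_j w i j * z s i j.
Proof.
move=> ex; under eq_bigr do under eq_bigr do rewrite ex mulr_sumr.
under eq_bigr do rewrite exchange_big /=; rewrite exchange_big /=.
apply: eq_bigr => s _; rewrite mulr_sumr; apply: eq_bigr => i _.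
by rewrite mulr_sumr; apply: eq_bigr => j _; rewrite mulrCA.
Qed.

Lemma sum_ffun2_prod (I J K : finType) (F : I -> J -> K -> C) :
  \sum_(f : {ffun I -> J}) \sum_(g : {ffun I -> K}) \prod_i F i (f i) (g i) =
  \prod_i \sum_j \sum_k F i j k.
Proof.
rewrite bigA_distr_bigA; apply: eq_bigr => f _.
by rewrite bigA_distr_bigA.
Qed.

Lemma prod_eq_ffun (I J : finType) (x y : {ffun I -> J}) :
  \prod_t ((x t == y t)%:R : C) = (x == y)%:R.
Proof.
case: (boolP [forall t, x t == y t]) => [/eqfunP/ffunP-> | /forallPn[t ne]].
  by rewrite eqxx big1 // => t _; rewrite eqxx.
rewrite (bigD1 t) //= (negbTE ne) mul0r; case: eqP => // exy.
by rewrite exy eqxx in ne.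
Qed.

Definition hs_orthonormal (K I : finType) (Z : K -> Op C I) :=
  forall s s', hs_ip (Z s) (Z s') = (s == s')%:R.

Definition hs_complete (K I : finType) (Z : K -> Op C I) :=
  forall i j i' j',
    \sum_s (Z s i j)^* * Z s i' j' = #|I|%:R * (i == i')%:R * (j == j')%:R.

Lemma hs_ipE (I : finType) (X Y : Op C I) :
  hs_ip X Y = #|I|%:R^-1 * \sum_i \sum_k (X k i)^* * Y k i.
Proof. by []. Qed.

Lemma hs_ip_sumr (I K : finType) (M X : Op C I) (c : K -> C) (Z : K -> Op C I) :
  (forall i j, X i j = \sum_s c s * Z s i j) ->
  hs_ip M X = \sum_s c s * hs_ip M (Z s).
Proof.
move=> eX; rewrite hs_ipE (sum2_linear _ (fun i k => eX k i)) mulr_sumr.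
by apply: eq_bigr => s _; rewrite mulrCA.
Qed.

Lemma hs_ip_orthonormal_coef (K I : finType) (Z : K -> Op C I) (X : Op C I)
    (c : K -> C) s :
  hs_orthonormal Z -> (forall i j, X i j = \sum_s c s * Z s i j) ->
  hs_ip (Z s) X = c s.
Proof.
move=> ortZ eX; rewrite (hs_ip_sumr _ eX) (bigD1 s) //= ortZ eqxx mulr1.
by rewrite big1 ?addr0 // => s' ne; rewrite ortZ eq_sym (negbTE ne) mulr0.
Qed.

Lemma hs_complete_expansion (K I : finType) (Z : K -> Op C I) (X : Op C I) i j :
  hs_complete Z -> X i j = \sum_s hs_ip (Z s) X * Z s i j.
Proof.
move=> cZ; have N0 : #|I|%:R != 0 :> C.
  by rewrite pnatr_eq0 -lt0n; apply/card_gt0P; exists i.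
transitivity (#|I|%:R^-1 *
    \sum_a \sum_b #|I|%:R * X b a * (a == j)%:R * (b == i)%:R).
  under eq_bigr do rewrite sum_mul_delta.
  by rewrite sum_mul_delta mulKf.
transitivity (#|I|%:R^-1 *
    \sum_a \sum_b X b a * \sum_s (Z s b a)^* * Z s i j).
  by congr (_ * _); apply: eq_bigr => a _; apply: eq_bigr => b _; rewrite cZ; ring.
under eq_bigr do under eq_bigr do rewrite mulr_sumr.
under eq_bigr do rewrite exchange_big /=; rewrite exchange_big mulr_sumr /=.
apply: eq_bigr => s _; rewrite hs_ipE -mulrA mulr_suml; congr (_ * _).
by apply: eq_bigr => a _; rewrite mulr_suml; apply: eq_bigr => b _; ring.
Qed.

Lemma hs_complete_eq (K I : finType) (Z : K -> Op C I) (X Y : Op C I) :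
  hs_complete Z -> (forall s, hs_ip (Z s) X = hs_ip (Z s) Y) -> X = Y.
Proof.
move=> cZ eXY; apply: functional_extensionality => i.
apply: functional_extensionality => j.
rewrite (hs_complete_expansion X i j cZ) (hs_complete_expansion Y i j cZ).
by apply: eq_bigr => s _; rewrite eXY.
Qed.

Lemma eq_mxvec_index k (a b a' b' : 'I_k) :
  (mxvec_index a b == mxvec_index a' b') = (a == a') && (b == b').
Proof.
have inj := bij_inj (onT_bij (curry_mxvec_bij k k)).
by rewrite -[LHS]/(uncurry _ (a, b) == uncurry _ (a', b')) (inj_eq inj).
Qed.

Lemma hs_orthonormal_complete k (Bs : 'I_(k ^ 2) -> Op C 'I_k) :
  hs_orthonormal Bs -> hs_complete Bs.
Proof.
(* The rows of A are the vectorised B_p, so orthonormality reads A A' = 1;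
   for square matrices this gives A' A = 1, which is completeness. *)
move=> ortB a b a' b'; rewrite card_ord.
have k0 : k%:R != 0 :> C by rewrite pnatr_eq0 -lt0n (leq_ltn_trans _ (ltn_ord a)).
pose A : 'M[C]_(k * k) := \matrix_(p, c) mxvec (\matrix_(i, j) Bs p i j) 0 c.
have AE p i j : A p (mxvec_index i j) = Bs p i j by rewrite !mxE mxvecE mxE.
pose A' : 'M[C]_(k * k) := k%:R^-1 *: (map_mx Num.conj A)^T.
have AA' : A *m A' = 1%:M.
  apply/matrixP => p q; rewrite !mxE eq_sym -(ortB q p) hs_ipE card_ord.
  rewrite [in RHS]exchange_big (reindex _ (curry_mxvec_bij k k)) /=.
  rewrite pair_bigA /= mulr_sumr; apply: eq_bigr => -[i j] _ /=.
  by rewrite (AE p i j) !mxE mxvecE mxE mulrCA [Bs p i j * _]mulrC.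
have /matrixP/(_ (mxvec_index a b) (mxvec_index a' b')) := mulmx1C AA'.
rewrite !mxE eq_mxvec_index -mulnb natrM.
under eq_bigr => p _ do rewrite (AE p a' b') !mxE mxvecE mxE -mulrA.
by rewrite -mulr_sumr -mulrA => <-; rewrite mulVKf.
Qed.

Definition op_tensor (I : finType) n (X : 'I_n -> Op C I) : Op C {ffun 'I_n -> I} :=
  fun i j => \prod_t X t (i t) (j t).

Lemma hs_ip_tensor (I : finType) n (X Y : 'I_n -> Op C I) :
  hs_ip (op_tensor X) (op_tensor Y) = \prod_t hs_ip (X t) (Y t).
Proof.
rewrite hs_ipE big_split /= prodr_const card_ffun card_ord natrX exprVn.
congr (_ * _); rewrite -sum_ffun2_prod.
apply: eq_bigr => i _; apply: eq_bigr => k _.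
by rewrite rmorph_prod -big_split.
Qed.

Lemma basis_tensor_orthonormal k n (Bs : 'I_(k ^ 2) -> Op C 'I_k) :
  hs_orthonormal Bs -> hs_orthonormal (@basis_tensor C k n Bs).
Proof.
move=> ortB s s'.
rewrite (hs_ip_tensor (fun t => Bs (s t)) (fun t => Bs (s' t))).
under eq_bigr do rewrite ortB.
exact: prod_eq_ffun.
Qed.

Lemma basis_tensor_complete k n (Bs : 'I_(k ^ 2) -> Op C 'I_k) :
  hs_complete Bs -> hs_complete (@basis_tensor C k n Bs).
Proof.
move=> cB i j i' j'.
transitivity (\prod_t \sum_p (Bs p (i t) (j t))^* * Bs p (i' t) (j' t)).
  by rewrite bigA_distr_bigA; apply: eq_bigr => s _; rewrite rmorph_prod -big_split.
under eq_bigr do rewrite cB.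
by rewrite !big_split /= prodr_const !prod_eq_ffun !card_ffun !card_ord natrX.
Qed.

Lemma es_comp_expansion k n (Bs : 'I_(k ^ 2) -> Op C 'I_k)
    (c : {ffun 'I_n -> 'I_(k ^ 2)} -> C) S :
  is_expansion Bs (es_comp Bs c S) (fun s => if supp s == S then c s else 0).
Proof.
move=> i j; rewrite /es_comp big_mkcond; apply: eq_bigr => s _.
by case: ifP; rewrite ?mul0r.
Qed.

Definition corr (I J : finType) (psi : Op C (I * J)%type) (X : Op C I) (Y : Op C J) : C :=
  op_tr (op_mul (op_kron (op_adj X) Y) psi).

Lemma corrE (I J : finType) (psi : Op C (I * J)%type) X Y :
  corr psi X Y = \sum_p \sum_q ((X q.1 p.1)^* * psi q p) * Y p.2 q.2.
Proof.
by apply: eq_bigr => p _; apply: eq_bigr => q _; rewrite mulrAC.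
Qed.

Lemma corr_sumr (I J K : finType) (psi : Op C (I * J)%type) X (Y : Op C J)
    (c : K -> C) (Z : K -> Op C J) :
  (forall i j, Y i j = \sum_s c s * Z s i j) ->
  corr psi X Y = \sum_s c s * corr psi X (Z s).
Proof.
move=> eY; rewrite corrE (sum2_linear _ (fun p q => eY p.2 q.2)).
by under [RHS]eq_bigr do rewrite corrE.
Qed.

Lemma corr_tensor mA mB n (psi : Op C ('I_mA * 'I_mB)%type)
    (X : 'I_n -> Op C 'I_mA) (Y : 'I_n -> Op C 'I_mB) :
  corr (@state_pow C mA mB n psi) (op_tensor X) (op_tensor Y) =
  \prod_t corr psi (X t) (Y t).
Proof.
transitivity (\prod_t \sum_a \sum_b \sum_c \sum_d
    (X t c a)^* * Y t b d * psi (c, d) (a, b)).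
  rewrite -sum_ffun2_prod /corr /op_tr /op_mul sum_pair.
  apply: eq_bigr => a _; apply: eq_bigr => b _.
  rewrite -sum_ffun2_prod sum_pair; apply: eq_bigr => c _; apply: eq_bigr => d _.
  by rewrite /op_kron /op_adj /op_tensor /state_pow rmorph_prod -!big_split.
apply: eq_bigr => t _; rewrite /corr /op_tr /op_mul sum_pair.
by apply: eq_bigr => a _; apply: eq_bigr => b _; rewrite sum_pair.
Qed.

Lemma corr_op_id_r (I J : finType) (psi : Op C (I * J)%type) (X : Op C I) :
  corr psi X (@op_id C J) = \sum_a \sum_c (X c a)^* * marg_A psi c a.
Proof.
rewrite corrE sum_pair; apply: eq_bigr => a _; rewrite exchange_big sum_pair /=.
apply: eq_bigr => c _; rewrite /marg_A mulr_sumr exchange_big.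
apply: eq_bigr => b _ /=; rewrite /op_id.
by under eq_bigr do rewrite eq_sym; rewrite sum_mul_delta.
Qed.

Lemma corr_op_id_l (I J : finType) (psi : Op C (I * J)%type) (Y : Op C J) :
  corr psi (@op_id C I) Y = \sum_b \sum_d Y b d * marg_B psi d b.
Proof.
rewrite corrE sum_pair exchange_big /=; apply: eq_bigr => b _.
under eq_bigr do rewrite sum_pair exchange_big /=.
rewrite exchange_big; apply: eq_bigr => d _; rewrite /marg_B mulr_sumr.
apply: eq_bigr => a _; rewrite /op_id.
under eq_bigr do rewrite conjC_nat -mulrA mulrC.
by rewrite sum_mul_delta mulrC.
Qed.

End Operators.

Section UniformMarginals.
Variables (C : numClosedFieldType) (mA mB : nat).
Variable psi : Op C ('I_mA * 'I_mB)%type.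
Hypothesis marg_A_uniform : marg_A psi = fun a a' => (a == a')%:R / mA%:R.
Hypothesis marg_B_uniform : marg_B psi = fun b b' => (b == b')%:R / mB%:R.

Lemma corr_op_id_r_uniform (X : Op C 'I_mA) :
  corr psi X (@op_id C _) = hs_ip X (@op_id C _).
Proof.
rewrite corr_op_id_r marg_A_uniform hs_ipE card_ord mulr_sumr.
apply: eq_bigr => a _; rewrite mulr_sumr; apply: eq_bigr => c _.
by rewrite mulrA mulrC.
Qed.

Lemma corr_op_id_l_uniform (Y : Op C 'I_mB) :
  corr psi (@op_id C _) Y = hs_ip (@op_id C _) Y.
Proof.
rewrite corr_op_id_l marg_B_uniform hs_ipE card_ord [in RHS]exchange_big mulr_sumr.
apply: eq_bigr => b _; rewrite mulr_sumr; apply: eq_bigr => d _.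
by rewrite /op_id conjC_nat eq_sym mulrA mulrC [_ * Y b d]mulrC.
Qed.

Variables (BsA : 'I_(mA ^ 2) -> Op C 'I_mA) (BsB : 'I_(mB ^ 2) -> Op C 'I_mB).
Hypotheses (onbA : std_onb BsA) (onbB : std_onb BsB).

Lemma corr_std_onb_eq0 p q :
  (val p == 0%N) != (val q == 0%N) -> corr psi (BsA p) (BsB q) = 0.
Proof.
have [_ ortA idA] := onbA; have [_ ortB idB] := onbB.
case: (eqVneq (val p) 0%N) => p0; case: (eqVneq (val q) 0%N) => q0 //= _.
  rewrite (idA p p0) corr_op_id_l_uniform.
  rewrite -(idB (Ordinal (leq_ltn_trans (leq0n _) (ltn_ord q)))) // ortB.
  by rewrite -val_eqE /= eq_sym (negbTE q0).
rewrite (idB q q0) corr_op_id_r_uniform.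
rewrite -(idA (Ordinal (leq_ltn_trans (leq0n _) (ltn_ord p)))) // ortA.
by rewrite -val_eqE /= (negbTE p0).
Qed.

Variable n : nat.

Lemma corr_basis_tensor_eq0 s u :
  supp s != supp u ->
  corr (@state_pow C mA mB n psi) (basis_tensor BsA s) (basis_tensor BsB u) = 0.
Proof.
move=> ne; have /existsP[t ht] : [exists t, (t \in supp s) != (t \in supp u)].
  rewrite -negb_forall; apply: contra ne => /forallP eq_t.
  by apply/eqP/setP => t; apply/eqP.
rewrite (corr_tensor psi (fun t => BsA (s t)) (fun t => BsB (u t))) (bigD1 t) //=.
by rewrite corr_std_onb_eq0 ?mul0r //; rewrite !inE (inj_eq negb_inj) in ht.
Qed.

Lemma corr_basis_es_comp (Q : Op C (Idx mB n)) c S s :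
  is_expansion BsB Q c ->
  corr (@state_pow C mA mB n psi) (basis_tensor BsA s) (es_comp BsB c S) =
  if supp s == S then corr (state_pow psi) (basis_tensor BsA s) Q else 0.
Proof.
move=> eQ; rewrite (corr_sumr _ _ (es_comp_expansion BsB c S)) (corr_sumr _ _ eQ).
case: eqP => [<- | ne].
  apply: eq_bigr => u _; case: eqP => // ne.
  by rewrite corr_basis_tensor_eq0 ?mulr0 // eq_sym; apply/eqP.
apply: big1 => u _; case: eqP => [eu | _]; last by rewrite mul0r.
by rewrite corr_basis_tensor_eq0 ?mulr0 // eu; apply/eqP.
Qed.

End UniformMarginals.

Theorem proposition3p12 (n mA mB : nat) (hn : (0 < n)%N) (hmA : (0 < mA)%N) (hmB : (0 < mB)%N)
  (psi : Op CC ('I_mA * 'I_mB)%type) (hpsi : is_state psi)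
  (hpsiA : marg_A psi = fun a a' => (a == a')%:R / mA%:R)
  (hpsiB : marg_B psi = fun b b' => (b == b')%:R / mB%:R)
  (T : Op CC (Idx mB n) -> Op CC (Idx mA n)) (hT : is_markov psi T)
  (BsA : 'I_(mA ^ 2) -> Op CC 'I_mA) (hBsA : std_onb BsA)
  (BsB : 'I_(mB ^ 2) -> Op CC 'I_mB) (hBsB : std_onb BsB)
  (Q : Op CC (Idx mB n)) (S : {set 'I_n})
  (cQ : {ffun 'I_n -> 'I_(mB ^ 2)} -> CC) (hcQ : is_expansion BsB Q cQ)
  (cTQ : {ffun 'I_n -> 'I_(mA ^ 2)} -> CC) (hcTQ : is_expansion BsA (T Q) cTQ) :
  T (es_comp BsB cQ S) = es_comp BsA cTQ S.
Proof.
have [_ ortA _] := hBsA.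
have ortTA := @basis_tensor_orthonormal _ _ n _ ortA.
have markov M Q' : corr (state_pow psi) M Q' = hs_ip M (T Q') := hT M Q'.
apply: (hs_complete_eq (basis_tensor_complete (hs_orthonormal_complete ortA))) => s.
rewrite (hs_ip_orthonormal_coef _ ortTA (es_comp_expansion BsA cTQ S)).
rewrite -markov (corr_basis_es_comp hpsiA hpsiB hBsA hBsB _ _ hcQ) markov.
by rewrite (hs_ip_orthonormal_coef _ ortTA hcTQ).
Qed.
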